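(* Regard the partially spherical subalgebra $e'H_pe'$ as a subring of $\mathscr K=\mathbb{C}(U_1,\dots,U_n)\star(T\rtimes S_n)$ via its action on $\mathbb{C}[U_1,\dots,U_n]$ described below. Then $e'H_pe'$ is a Galois $\mathbb{C}[U_1,\dots,U_n]$-ring in $\mathscr K$, i.e. it contains $\mathbb{C}[U_1,\dots,U_n]$ and $e'H_pe'\cdot\mathbb{C}(U_1,\dots,U_n)=\mathscr K=\mathbb{C}(U_1,\dots,U_n)\cdot e'H_pe'$.
   Context: Setting: $\ell,p,n$ positive integers, $p\mid\ell$, $\zeta=e^{2\pi i/\ell}$. $G(\ell,p,n)$ is the group of $n\times n$ monomial matrices with $\ell$-th root of unity entries whose product is an $(\ell/p)$-th root of unity. $H_p$ is the rational Cherednik algebra of $G(\ell,p,n)$ (quotient of $T(\mathfrak h\oplus\mathfrak h^* )\rtimes\mathbb{C}G(\ell,p,n)$, $\mathfrak h=\mathbb{C}^n$, by $[x,x']=0,[y,y']=0,[x,y]=\hbar\langle y,x\rangle-\sum_s c_s\langle\alpha_s,x\rangle\langle y,\alpha_s^\vee\rangle s$) with $\hbar\in\mathbb{C}^\times$, parameter $c$ on the reflections $t_i^kt_j^{-k}(i,j)$ and $c_m$ on $t_i^m$ (with $t_i=\mathrm{diag}(1,..,\zeta,..,1)$), where $c_m=0$ unless $p\mid m$. Put $h_r=\sum_{m=1}^{\ell-1}c_m\zeta^{rm}$ and $s_m=h_m+m\hbar$ for $m\in\mathbb{Z}$; then $s_{m+\ell/p}=s_m+\ell\hbar/p$. Let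 $A\subset G(\ell,p,n)$ be the subgroup of diagonal matrices and $e'=\frac1{|A|}\sum_{g\in A}g$; the partially spherical subalgebra is $e'H_pe'$. Skew ring: let $T\subset\mathbb{Z}^n$ be the lattice generated by $\ell e_1,\dots,\ell e_n$ and $\frac{\ell}{p}(e_1+\dots+e_n)$, acting on $\mathbb{C}(U_1,\dots,U_n)$ by $\mu_i(U_j)=U_j+\hbar\delta_{ij}$ ($\mu_i$ corresponding to $e_i$), and $S_n$ acting by permuting the $U_j$. $\mathscr K=\mathbb{C}(U)\star(T\rtimes S_n)$ is the free left $\mathbb{C}(U)$-module on $T\rtimes S_n$ with $(a\mu)(b\nu)=a\,\mu(b)\,\mu\nu$; it acts on $\mathbb{C}(U)$ by evaluation $(\sum a_\mu\mu)(f)=\sum a_\mu\mu(f)$. Embedding: $H_p$ has a faithful polynomial representation in which $e'H_pe'$ preserves a subspace identified with $\mathbb{C}[U_1,\dots,U_n]$; each element of $e'H_pe'$ acts there by the evaluation action of a unique element of $\mathscr K$, and $e'H_pe'$ is generated by elements acting by: multiplication by $U_i$; for $1\le i\le n-1$, $f\mapsto f^{w_i}+c\ell\frac{f^{w_i}-f}{U_{i+1}-U_i}$ ($w_i$ swapping $U_i,U_{i+1}$); $f\mapsto\prod_{m=0}^{\ell-1}(U_1+\ell\hbar-s_m)f(U_2,\dots,U_n,U_1+\ell\hbar)$; $f\mapsto f(U_n-\ell\hbar,U_1,\dots,U_{n-1})$; $f\mapsto\prod_{i=1}^n\prod_{m=0}^{\ell/p-1}(U_i+\ell\hbar/p-s_m)f(U_1+\ell\hbar/p,\dots,U_n+\ell\hbar/p)$;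 $f\mapsto f(U_1-\ell\hbar/p,\dots,U_n-\ell\hbar/p)$; and for $1\le i\le n-1$, $1\le j\le p-1$: $f\mapsto\prod_{r=1}^i\prod_{m=0}^{j\ell/p-1}(U_r+j\ell\hbar/p-s_m)\,f(U_{i+1}+j\ell\hbar/p-\ell\hbar,\dots,U_n+j\ell\hbar/p-\ell\hbar,U_1+j\ell\hbar/p,\dots,U_i+j\ell\hbar/p)$. A $\Gamma$-subring $\mathscr U\subseteq\mathscr K$ (with $\Gamma=\mathbb{C}[U]$, $K=\mathbb{C}(U)$) is a Galois $\Gamma$-ring if $\mathscr UK=\mathscr K=K\mathscr U$. *)

From HB Require Import structures.
From mathcomp Require Import all_boot all_order all_algebra all_fingroup.
From mathcomp Require Import generic_quotient fraction.
From mathcomp Require Import mpoly.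
Set Implicit Arguments. Unset Strict Implicit. Unset Printing Implicit Defensive.
Import Order.TTheory GRing.Theory Num.Theory.
Local Open Scope ring_scope.

Section Skew.
Variables (F : numClosedFieldType) (n : nat) (hb : F).

(* Gamma = F[U_1..U_n] (U_j is 'X_j, 0-based) and K = F(U_1..U_n). *)
Definition Gam := {mpoly F[n]}.
Definition KK := {fraction Gam}.

(* Group elements of Z^n x| S_n : a pair (t, s) acts on a function f by
   f |-> mu_t (s f), i.e. f(U_1..U_n) |-> f(U_{s 1} + t_{s 1} hb, ..., U_{s n} + t_{s n} hb),
   where s permutes the variables (s U_j = U_{s j}) and mu_t(U_j) = U_j + t_j hb. *)
Definition Grp := ({ffun 'I_n -> int} * {perm 'I_n})%type.

Definition gone : Grp := ([ffun=> 0%R], 1%g).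

(* composition: act (gmul g h) = act g \o act h *)
Definition gmul (g h : Grp) : Grp :=
  ([ffun i => g.1 i + h.1 ((g.2)^-1%g i)], (h.2 * g.2)%g).

Definition actP (g : Grp) (f : Gam) : Gam :=
  f \mPo [tuple ('X_(g.2 j) + ((g.1 (g.2 j))%:~R * hb)%:MP) | j < n].

Definition actK (g : Grp) (x : KK) : KK :=
  let r := repr x in tofrac (actP g \n_r) / tofrac (actP g \d_r).

(* Elements of the skew ring K * (Z^n x| S_n), represented as finite formal sums
   sum_i a_i g_i (a list of pairs), two lists representing the same element iff
   they have the same coefficient function. *)
Definition Kstar := seq (KK * Grp).

Definition coef (x : Kstar) (g : Grp) : KK := \sum_(a <- x | a.2 == g) a.1.

Definition keq (x y : Kstar) : Prop := forall g, coef x g = coef y g.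

Definition kadd (x y : Kstar) : Kstar := x ++ y.

(* (a mu)(b nu) = a mu(b) mu nu *)
Definition kmul (x y : Kstar) : Kstar :=
  [seq (a.1 * actK a.2 b.1, gmul a.2 b.2) | a <- x, b <- y].

Definition kembed (k : KK) : Kstar := [:: (k, gone)].

Definition ksum (s : seq Kstar) : Kstar := flatten s.

(* the lattice T generated by l e_1, ..., l e_n and (l/p)(e_1 + ... + e_n) *)
Definition inT (l p : nat) (t : {ffun 'I_n -> int}) : Prop :=
  exists (b : int) (a : 'I_n -> int),
    forall i, t i = a i * (l%:Z) + b * ((l %/ p)%N%:Z).

(* x lies in scr K = K * (T x| S_n) *)
Definition inKT (l p : nat) (x : Kstar) : Prop :=
  forall g, coef x g != 0 -> inT l p g.1.
End Skew.

Section Cherednik.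
Variables (F : numClosedFieldType) (l p n : nat) (zeta hb c : F) (cm : nat -> F).

Local Notation KK := (KK F n).
Local Notation Grp := (Grp n).
Local Notation Kstar := (Kstar F n).

Definition Ufr (i : 'I_n) : KK := tofrac ('X_i : {mpoly F[n]}).
Definition Cfr (a : F) : KK := tofrac (a%:MP : {mpoly F[n]}).

Definition hpar (r : nat) : F := \sum_(1 <= m < l) cm m * zeta ^+ (r * m).
Definition spar (m : nat) : F := hpar m + m%:R * hb.

Definition cyc : {perm 'I_n} := perm (@ordS_inj n).

Definition tconst (k : int) : {ffun 'I_n -> int} := [ffun=> k].

(* generators of e'H_p e', as elements of scr K (their evaluation action on
   F[U] is the one listed in the paper) *)
Inductive gen : Kstar -> Prop :=
  | gen_U (i : 'I_n) : gen [:: (Ufr i, gone n)]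
  (* f |-> f^{w_i} + c l (f^{w_i} - f)/(U_{i+1} - U_i) *)
  | gen_T (i j : 'I_n) : j = i.+1 :> nat ->
      gen [:: (1 + Cfr (c * l%:R) / (Ufr j - Ufr i), (tconst 0, tperm i j));
              (- (Cfr (c * l%:R) / (Ufr j - Ufr i)), gone n)]
  (* f |-> prod_{m<l} (U_1 + l hb - s_m) f(U_2,...,U_n,U_1 + l hb) *)
  | gen_X (i0 : 'I_n) : i0 = 0 :> nat ->
      gen [:: (\prod_(m < l) (Ufr i0 + Cfr (l%:R * hb - spar m)),
               ([ffun i => if i == i0 then l%:Z else 0], cyc))]
  (* f |-> f(U_n - l hb, U_1, ..., U_{n-1}) *)
  | gen_Y (i1 : 'I_n) : i1 = n.-1 :> nat ->
      gen [:: (1, ([ffun i => if i == i1 then - l%:Z else 0], (cyc^-1)%g))]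
  (* f |-> prod_i prod_{m < l/p} (U_i + l hb/p - s_m) f(U + l hb/p) *)
  | gen_P : gen [:: (\prod_(i < n) \prod_(m < l %/ p)
                       (Ufr i + Cfr ((l %/ p)%:R * hb - spar m)),
                     (tconst (l %/ p)%:Z, 1%g))]
  (* f |-> f(U - l hb/p) *)
  | gen_Q : gen [:: (1, (tconst (- (l %/ p)%:Z), 1%g))]
  | gen_R (i j : nat) : (1 <= i <= n.-1)%N -> (1 <= j <= p.-1)%N ->
      gen [:: (\prod_(r < n | (r < i)%N) \prod_(m < j * (l %/ p))
                 (Ufr r + Cfr ((j * (l %/ p))%:R * hb - spar m)),
               ([ffun r : 'I_n => (j * (l %/ p))%:Z - (if (i <= r)%N then l%:Z else 0)],
                (cyc ^+ i)%g))].

(* the subalgebra of scr K generated by the generators (the partially spherical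
   subalgebra e'H_p e' viewed inside scr K) *)
Inductive inU : Kstar -> Prop :=
  | inU_gen x : gen x -> inU x
  | inU_scal (a : F) : inU (kembed (Cfr a))
  | inU_add x y : inU x -> inU y -> inU (kadd x y)
  | inU_mul x y : inU x -> inU y -> inU (kmul hb x y)
  | inU_eq x y : inU x -> keq x y -> inU y.

End Cherednik.

(* For g in T x| S_n call a "monomial" of U an element a g of U with a in K nonzero.
   Monomials are closed under products because g acts on K by a field automorphism, and
   once every g in T x| S_n has one, any k g is (k/a)(a g) = (a g) g^-1(k/a), which gives
   U K = scr K = K U.  Monomials exist for the adjacent transpositions, since
   (U_{i+1} - U_i) T_i + c l = (U_{i+1} - U_i + c l) w_i, hence for all of S_n; the
   generators X, Y and the pair P, Q give monomials for l e_1, - l e_n and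
   +-(l/p)(e_1 + ... + e_n), and conjugating by S_n yields +- l e_i, which together
   generate T.  U lies in scr K because the generators are supported on T x| S_n, and
   U contains Gamma because it contains the scalars and the U_i. *)

From Pilot Require Import Defs.
From HB Require Import structures.
From mathcomp Require Import all_boot all_order all_algebra all_fingroup.
From mathcomp Require Import generic_quotient fraction.
From mathcomp Require Import mpoly.
From mathcomp Require Import ring zify.
Set Implicit Arguments. Unset Strict Implicit. Unset Printing Implicit Defensive.
Import Order.TTheory GRing.Theory Num.Theory.
Local Open Scope ring_scope.

Lemma pi_numden (R : idomainType) (r : {ratio R}) :
  \pi_({fraction R})%qT r = tofrac \n_r / tofrac \d_r.
Proof.
have d0 : tofrac \d_r != 0 :> {fraction R} by rewrite tofrac_eq0 denom_ratioP.
apply/(mulIf d0); rewrite divfK // mulrC; apply/eqP.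
rewrite !piE /FracField.mulf /= FracField.equivfE.
by rewrite !numden_Ratio ?mulf_neq0 ?oner_neq0 ?denom_ratioP // !mulr1 mul1r mulrC.
Qed.

Lemma frac_numden (R : idomainType) (x : {fraction R}) :
  x = tofrac \n_(repr x) / tofrac \d_(repr x).
Proof. by rewrite -pi_numden reprK. Qed.

Lemma fracP (R : idomainType) (x : {fraction R}) :
  exists a b, b != 0 /\ x = tofrac a / tofrac b.
Proof.
by exists \n_(repr x), \d_(repr x); split; [exact: denom_ratioP | exact: frac_numden].
Qed.

Section FracMap.
Variables (R S : idomainType) (f : {rmorphism R -> S}).
Hypothesis f_inj : injective f.

Definition frac_map (x : {fraction R}) : {fraction S} :=
  tofrac (f \n_(repr x)) / tofrac (f \d_(repr x)).

Lemma tofrac_map_eq0 a : (tofrac (f a) == 0 :> {fraction S}) = (a == 0).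
Proof. by rewrite tofrac_eq0 -(inj_eq f_inj) rmorph0. Qed.

Lemma frac_map_div a b : b != 0 ->
  frac_map (tofrac a / tofrac b) = tofrac (f a) / tofrac (f b).
Proof.
move=> b0; rewrite /frac_map; set x := tofrac a / tofrac b.
have dx0 : \d_(repr x) != 0 := denom_ratioP _.
have cross : a * \d_(repr x) = \n_(repr x) * b.
  apply/eqP; rewrite -tofrac_eq !tofracM -eqr_div ?tofrac_eq0 //.
  by rewrite -frac_numden.
by apply/eqP; rewrite eqr_div ?tofrac_map_eq0 // -!tofracM -!rmorphM cross.
Qed.

Lemma frac_mapD : {morph frac_map : x y / x + y}.
Proof.
move=> x y; have [a [b [b0 ->]]] := fracP x; have [c [d [d0 ->]]] := fracP y.
rewrite addf_div ?tofrac_eq0 // -!tofracM -tofracD.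
rewrite !frac_map_div ?mulf_neq0 // rmorphD !rmorphM /= tofracD !tofracM.
by rewrite addf_div ?tofrac_map_eq0.
Qed.

Lemma frac_map0 : frac_map 0 = 0.
Proof. by apply/(addrI (frac_map 0)); rewrite -frac_mapD !addr0. Qed.

Lemma frac_map_sum (I : Type) (r : seq I) (P : pred I) (F : I -> {fraction R}) :
  frac_map (\sum_(i <- r | P i) F i) = \sum_(i <- r | P i) frac_map (F i).
Proof. exact: (big_morph _ frac_mapD frac_map0). Qed.

Lemma frac_map_eq0 x : (frac_map x == 0) = (x == 0).
Proof.
have [a [b [b0 ->]]] := fracP x.
by rewrite frac_map_div // !mulf_eq0 !invr_eq0 !tofrac_map_eq0 !tofrac_eq0.
Qed.

Lemma frac_map_surj g : cancel g f -> forall y, exists x, frac_map x = y.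
Proof.
move=> gK y; have [a [b [b0 ->]]] := fracP y.
have gb0 : g b != 0 by apply: contraNneq b0 => gb0; rewrite -(gK b) gb0 rmorph0.
by exists (tofrac (g a) / tofrac (g b)); rewrite frac_map_div // !gK.
Qed.

End FracMap.

Lemma frac_map_id (R : idomainType) (f : {rmorphism R -> R}) :
  f =1 id -> frac_map f =1 id.
Proof. by move=> fE x; rewrite /frac_map !fE -frac_numden. Qed.

Lemma comp_mpoly_comp (R : comNzRingType) (n k m : nat) (p : {mpoly R[n]})
    (lq : n.-tuple {mpoly R[k]}) (lr : k.-tuple {mpoly R[m]}) :
  (p \mPo lq) \mPo lr = p \mPo [tuple tnth lq i \mPo lr | i < n].
Proof.
rewrite (comp_mpolyEX p lq) [RHS]comp_mpolyEX raddf_sum /=; apply: eq_bigr => m' _.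
rewrite comp_mpolyZ !comp_mpolyX rmorph_prod /=; congr (_ *: _).
by apply: eq_bigr => i _; rewrite rmorphXn /= tnth_map tnth_ord_tuple.
Qed.

Section SkewRing.
Variables (F : numClosedFieldType) (n : nat) (hb : F).
Local Notation Grp := (Defs.Grp n).
Local Notation gone := (Defs.gone n).
Local Notation KK := (Defs.KK F n).
Local Notation actP := (@Defs.actP F n hb).
Local Notation actK := (@Defs.actK F n hb).

Definition ginv (g : Grp) : Grp := ([ffun i => - g.1 (g.2 i)], (g.2)^-1%g).

Lemma gmulVg g : gmul (ginv g) g = gone.
Proof.
rewrite /gmul /ginv /=; congr (_, _); last by rewrite mulgV.
by apply/ffunP => i; rewrite !ffunE invgK addNr.
Qed.

Lemma gmulgV g : gmul g (ginv g) = gone.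
Proof.
rewrite /gmul /ginv /=; congr (_, _); last by rewrite mulVg.
by apply/ffunP => i; rewrite !ffunE permKV addrN.
Qed.

Lemma gmul1g g : gmul gone g = g.
Proof.
case: g => t s; rewrite /gmul /=; congr (_, _); last by rewrite mulg1.
by apply/ffunP => i; rewrite !ffunE invg1 perm1 add0r.
Qed.

Lemma gmulg1 g : gmul g gone = g.
Proof.
case: g => t s; rewrite /gmul /=; congr (_, _); last by rewrite mul1g.
by apply/ffunP => i; rewrite !ffunE addr0.
Qed.

Lemma gmul_perm (t : {ffun 'I_n -> int}) s s' :
  gmul (t, s) ([ffun=> 0], s') = (t, (s' * s)%g).
Proof. by rewrite /gmul /=; congr (_, _); apply/ffunP => i; rewrite !ffunE addr0. Qed.

Lemma gmul_perm_trans s (t : {ffun 'I_n -> int}) :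
  gmul ([ffun=> 0], s) (t, 1%g) = ([ffun i => t (s^-1 i)%g], s).
Proof.
by rewrite /gmul /= mul1g; congr (_, _); apply/ffunP => i; rewrite !ffunE add0r.
Qed.

Lemma gmul_trans (t t' : {ffun 'I_n -> int}) :
  gmul (t, 1%g) (t', 1%g) = (t + t', 1%g).
Proof.
rewrite /gmul /= mulg1; congr (_, _).
by apply/ffunP => i; rewrite !ffunE invg1 perm1.
Qed.

Lemma actP_gmul g h f : actP g (actP h f) = actP (gmul g h) f.
Proof.
rewrite /Defs.actP comp_mpoly_comp; congr (f \mPo _); apply: eq_from_tnth => j.
rewrite !tnth_map !tnth_ord_tuple /= comp_mpolyD comp_mpolyXU comp_mpolyC.
rewrite -(tnth_nth 0) tnth_map tnth_ord_tuple /= ffunE permM -addrA -mpolyCD.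
by rewrite permK intrD mulrDl addrC.
Qed.

Lemma actP1 f : actP gone f = f.
Proof.
rewrite /Defs.actP -[RHS]comp_mpoly_id; congr (f \mPo _); apply: eq_from_tnth => j.
by rewrite !tnth_map !tnth_ord_tuple /= ffunE mul0r mpolyC0 addr0 perm1.
Qed.

Lemma actPK g : cancel (actP g) (actP (ginv g)).
Proof. by move=> f; rewrite actP_gmul gmulVg actP1. Qed.

Lemma actPVK g : cancel (actP (ginv g)) (actP g).
Proof. by move=> f; rewrite actP_gmul gmulgV actP1. Qed.

Lemma actP_inj g : injective (actP g).
Proof. exact: can_inj (actPK g). Qed.

Lemma actKE g : actK g =1 frac_map (comp_mpoly
  [tuple ('X_(g.2 j) + ((g.1 (g.2 j))%:~R * hb)%:MP) | j < n]).
Proof. by []. Qed.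

Lemma actK_sum g (I : Type) (r : seq I) (P : pred I) (f : I -> KK) :
  actK g (\sum_(i <- r | P i) f i) = \sum_(i <- r | P i) actK g (f i).
Proof. by rewrite !actKE (frac_map_sum (@actP_inj g)). Qed.

Lemma actK0 g : actK g 0 = 0.
Proof. by rewrite actKE (frac_map0 (@actP_inj g)). Qed.

Lemma actK_eq0 g x : (actK g x == 0) = (x == 0).
Proof. by rewrite actKE (frac_map_eq0 (@actP_inj g)). Qed.

Lemma actK_surj g y : exists x, actK g x = y.
Proof.
have [x <-] := frac_map_surj (@actP_inj g) (actPVK g) y.
by exists x; rewrite actKE.
Qed.

Lemma actK1 x : actK gone x = x.
Proof. by rewrite actKE frac_map_id //; exact: actP1. Qed.

Local Notation Kstar := (Defs.Kstar F n).
Local Notation coef := (@Defs.coef F n).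
Local Notation kmul := (@Defs.kmul F n hb).

Lemma coefE (x : Kstar) g : coef x g = \sum_(a <- x) a.1 * (a.2 == g)%:R.
Proof.
rewrite /Defs.coef big_mkcond; apply: eq_bigr => a _.
by case: eqP; rewrite ?mulr1 ?mulr0.
Qed.

Lemma coef_nil g : coef [::] g = 0.
Proof. by rewrite /Defs.coef big_nil. Qed.

Lemma coef_cat (x y : Kstar) g : coef (x ++ y) g = coef x g + coef y g.
Proof. by rewrite /Defs.coef big_cat. Qed.

Lemma coef_seq1 k g0 g : coef [:: (k, g0)] g = if g0 == g then k else 0.
Proof. by rewrite /Defs.coef big_cons big_nil /=; case: eqP; rewrite ?addr0. Qed.

Lemma big_coef (x : Kstar) (f : Grp -> KK) (s : seq Grp) :
  uniq s -> {subset [seq a.2 | a <- x] <= s} ->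
  \sum_(a <- x) a.1 * f a.2 = \sum_(g <- s) coef x g * f g.
Proof.
move=> s_uniq xs.
under [RHS]eq_bigr do rewrite coefE big_distrl.
rewrite exchange_big /= big_seq [RHS]big_seq; apply: eq_bigr => a ax.
under eq_bigr do rewrite -mulrA; rewrite -mulr_sumr; congr (_ * _).
under eq_bigr do rewrite mulr_natl mulrb.
rewrite -big_mkcond -big_filter (@eq_filter _ _ (pred1 a.2)).
  by rewrite filter_pred1_uniq ?big_seq1 //; apply: xs; exact: map_f.
by move=> g; rewrite /= eq_sym.
Qed.

Lemma keq_big (x x' : Kstar) (f : Grp -> KK) : keq x x' ->
  \sum_(a <- x) a.1 * f a.2 = \sum_(a <- x') a.1 * f a.2.
Proof.
move=> xx'; have s_uniq := undup_uniq [seq a.2 | a <- x ++ x'].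
rewrite !(big_coef f s_uniq); first by apply: eq_bigr => g _; rewrite xx'.
all: by move=> g gx; rewrite mem_undup map_cat mem_cat gx ?orbT.
Qed.

Lemma coef_kmul (x y : Kstar) g : coef (kmul x y) g =
  \sum_(a <- x) a.1 * actK a.2 (\sum_(b <- y) b.1 * (gmul a.2 b.2 == g)%:R).
Proof.
rewrite coefE /Defs.kmul big_allpairs_dep /=; apply: eq_bigr => a _.
rewrite actK_sum mulr_sumr; apply: eq_bigr => b _.
by case: eqP; rewrite ?(mulr1, mulr0, actK0).
Qed.

Lemma kmul_keql (x x' y : Kstar) : keq x x' -> keq (kmul x y) (kmul x' y).
Proof.
move=> xx' g; rewrite !coef_kmul.
exact: (keq_big (fun h => actK h (\sum_(b <- y) b.1 * (gmul h b.2 == g)%:R)) xx').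
Qed.

Lemma kmul_keqr (x y y' : Kstar) : keq y y' -> keq (kmul x y) (kmul x y').
Proof.
move=> yy' g; rewrite !coef_kmul; apply: eq_bigr => a _.
by rewrite (keq_big (fun h => (gmul a.2 h == g)%:R) yy').
Qed.

Lemma keq_trans (x y z : Kstar) : keq x y -> keq y z -> keq x z.
Proof. by move=> xy yz g; rewrite xy yz. Qed.

Lemma keq_undup (x : Kstar) : keq [seq (coef x g, g) | g <- undup [seq a.2 | a <- x]] x.
Proof.
move=> h; rewrite [RHS]coefE.
rewrite (big_coef (fun g => (g == h)%:R) (undup_uniq [seq a.2 | a <- x])).
  by rewrite coefE big_map.
by move=> g; rewrite mem_undup.
Qed.

End SkewRing.

Lemma sum_neq0_has (V : nmodType) (I : eqType) (r : seq I) (f : I -> V) :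
  \sum_(i <- r) f i != 0 -> has (fun i => f i != 0) r.
Proof.
apply: contraNT => /hasPn f0; rewrite big1_seq // => i /f0.
by rewrite negbK => /eqP.
Qed.

Section Lattice.
Variables (F : numClosedFieldType) (n : nat) (hb : F) (l p : nat).
Local Notation Grp := (Defs.Grp n).
Local Notation Kstar := (Defs.Kstar F n).
Local Notation coef := (@Defs.coef F n).
Local Notation kmul := (@Defs.kmul F n hb).
Local Notation actK := (@Defs.actK F n hb).
Local Notation inT := (@inT n l p).
Local Notation inKT := (@inKT F n l p).

Lemma inT0 : inT [ffun=> 0].
Proof. by exists 0, (fun=> 0) => i; rewrite ffunE !mul0r addr0. Qed.

Lemma inT_gmul (g h : Grp) : inT g.1 -> inT h.1 -> inT (gmul g h).1.
Proof.
move=> [b [a ga]] [b' [a' ha']].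
exists (b + b'), (fun i => a i + a' ((g.2)^-1%g i)) => i.
by rewrite ffunE ga ha'; ring.
Qed.

Lemma inKT_seq1 k t s : inT t -> inKT [:: (k, (t, s))].
Proof. by move=> tT h; rewrite coef_seq1; case: ((t, s) =P h) => [<-|]; rewrite ?eqxx. Qed.

Lemma inKT_cat (x y : Kstar) : inKT x -> inKT y -> inKT (x ++ y).
Proof.
move=> xT yT g; rewrite coef_cat; have [x0|/xT //] := eqVneq (coef x g) 0.
by rewrite x0 add0r => /yT.
Qed.

Lemma inKT_keq (x y : Kstar) : keq x y -> inKT x -> inKT y.
Proof. by move=> xy xT g; rewrite -xy => /xT. Qed.

Lemma inKT_kmul (x y : Kstar) : inKT x -> inKT y -> inKT (kmul x y).
Proof.
move=> xT yT g; rewrite coef_kmul.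
rewrite (big_coef (fun h => actK h (\sum_(b <- y) b.1 * (gmul h b.2 == g)%:R))
                  (undup_uniq [seq a.2 | a <- x])); last by move=> h; rewrite mem_undup.
case/sum_neq0_has/hasP => g1 _; rewrite mulf_eq0 negb_or actK_eq0 => /andP [/xT g1T].
rewrite (big_coef (fun h => (gmul g1 h == g)%:R) (undup_uniq [seq b.2 | b <- y])); last first.
  by move=> h; rewrite mem_undup.
case/sum_neq0_has/hasP => g2 _.
case: (gmul g1 g2 =P g) => [<-|]; last by rewrite mulr0 eqxx.
by rewrite mulr1 => /yT; exact: inT_gmul.
Qed.

Lemma inKT_ind (P : Kstar -> Prop) :
    P [::] -> (forall x y, P x -> P y -> P (x ++ y)) ->
    (forall x y, keq x y -> P x -> P y) ->
    (forall k (g : Grp), k != 0 -> inT g.1 -> P [:: (k, g)]) ->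
  forall x, inKT x -> P x.
Proof.
(* The terms of [x] itself may lie outside T x| S_n (with cancelling coefficients),
   so the induction runs over the normal form of [x]. *)
move=> P0 Pcat Pkeq Pterm x xT; apply: (Pkeq _ _ (keq_undup x)).
elim: (undup _) => [|g s IH] //=; rewrite -cat1s; apply: Pcat => //.
have [x0|x0] := eqVneq (coef x g) 0; last exact: Pterm x0 (xT g x0).
by apply: (Pkeq _ _ _ P0) => h; rewrite coef_nil coef_seq1 x0; case: eqP.
Qed.

End Lattice.

Arguments inT0 {n l p}.

Lemma tperm_conj (T : finType) (x y z : T) : x != y -> x != z ->
  tperm x y = (tperm z y * tperm x z * tperm z y)%g.
Proof.
move=> xy xz; rewrite -{1}(tpermV z y) -mulgA -conjgE tpermJ tpermL tpermD //.
all: by rewrite eq_sym.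
Qed.

Lemma addmonoid_mulrz (V : zmodType) (P : V -> Prop) (v : V) :
    P 0 -> (forall x y, P x -> P y -> P (x + y)) -> P v -> P (- v) ->
  forall z : int, P (v *~ z).
Proof.
move=> P0 PD Pv PNv.
have Pn w : P w -> forall m, P (w *+ m).
  by move=> Pw; elim=> // m IH; rewrite mulrS; exact: PD.
by case=> m; [exact: Pn | rewrite NegzE mulrNz -mulNrn; exact: Pn].
Qed.

Definition ebasis n (i : 'I_n) (z : int) : {ffun 'I_n -> int} :=
  [ffun j => if j == i then z else 0].

Lemma ebasis_perm n (s : {perm 'I_n}) i z :
  [ffun j => ebasis i z (s^-1 j)%g] = ebasis (s i) z.
Proof. by apply/ffunP => j; rewrite !ffunE (can2_eq (permKV s) (permK s)). Qed.

Section Cherednik.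
Variables (F : numClosedFieldType) (l p n : nat) (zeta hb c : F) (cm : nat -> F).
Local Notation Grp := (Defs.Grp n).
Local Notation KK := (Defs.KK F n).
Local Notation Kstar := (Defs.Kstar F n).
Local Notation gone := (Defs.gone n).
Local Notation actK := (@Defs.actK F n hb).
Local Notation kmul := (@Defs.kmul F n hb).
Local Notation Ufr := (@Ufr F n).
Local Notation Cfr := (Cfr n).
Local Notation inT := (@inT n l p).
Local Notation inKT := (@inKT F n l p).
Local Notation U := (@inU F l p n zeta hb c cm).

Lemma inU_inKT u : U u -> inKT u.
Proof.
elim=> [x [i|i j _|i0 _|i1 _||| i j _ _]|a|x y _ xT _ yT|x y _ xT _ yT|x y _ xT xy].
- exact: inKT_seq1 inT0.
- by apply: (@inKT_cat _ _ _ _ [:: _] [:: _]); apply: inKT_seq1 inT0.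
- apply: inKT_seq1; exists 0, (fun i => (i == i0)%:Z) => i.
  by rewrite ffunE; case: eqP; rewrite ?mul1r ?mul0r addr0.
- apply: inKT_seq1; exists 0, (fun i => - (i == i1)%:Z) => i.
  by rewrite ffunE; case: eqP; rewrite ?mulN1r ?oppr0 ?mul0r addr0.
- by apply: inKT_seq1; exists 1, (fun=> 0) => i; rewrite ffunE mul0r mul1r add0r.
- by apply: inKT_seq1; exists (-1), (fun=> 0) => i; rewrite ffunE mul0r mulN1r add0r.
- apply: inKT_seq1; exists j%:Z, (fun r : 'I_n => - (i <= r)%N%:Z) => r.
  rewrite ffunE PoszM addrC.
  by case: leqP; rewrite ?mulN1r ?oppr0 ?mul0r ?subr0.
- exact: inKT_seq1 inT0.
- exact: inKT_cat.
- exact: inKT_kmul.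
- exact: inKT_keq xT.
Qed.

Definition inU_K (k : KK) : Prop := exists u, U u /\ keq u (kembed k).

Lemma inU_K_add a b : inU_K a -> inU_K b -> inU_K (a + b).
Proof.
move=> [u [Uu ua]] [v [Uv vb]]; exists (kadd u v); split; first exact: inU_add.
move=> g; rewrite coef_cat ua vb !coef_seq1.
by case: eqP; rewrite ?addr0.
Qed.

Lemma inU_K_mul a b : inU_K a -> inU_K b -> inU_K (a * b).
Proof.
move=> [u [Uu ua]] [v [Uv vb]]; exists (kmul u v); split; first exact: inU_mul.
apply: keq_trans (kmul_keql hb v ua) _; apply: keq_trans (kmul_keqr hb _ vb) _.
by rewrite /Defs.kmul /= actK1 gmul1g.
Qed.

Lemma inU_K_C a : inU_K (Cfr a).
Proof. by exists (kembed (Cfr a)); split; [exact: inU_scal | by []]. Qed.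

Lemma inU_K_poly q : inU_K (tofrac q).
Proof.
have inU_K0 : inU_K 0 by have := inU_K_C 0; rewrite /Defs.Cfr mpolyC0 tofrac0.
have inU_K1 : inU_K 1 by have := inU_K_C 1; rewrite /Defs.Cfr mpolyC1 tofrac1.
have inU_K_X i : inU_K (tofrac 'X_i).
  by exists [:: (Ufr i, gone)]; split; [exact/inU_gen/gen_U | by []].
rewrite (mpolyE q) rmorph_sum; apply: (big_ind inU_K) => //; first exact: inU_K_add.
move=> m _; rewrite -mul_mpolyC rmorphM; apply: inU_K_mul; first exact: inU_K_C.
rewrite mpolyXE_id rmorph_prod; apply: (big_ind inU_K) => //; first exact: inU_K_mul.
move=> i _; rewrite rmorphXn; elim: (m i) => [//|k IH].
by rewrite exprS; exact: inU_K_mul (inU_K_X i) IH.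
Qed.

Definition has_monomial (g : Grp) : Prop := exists2 a : KK, a != 0 & U [:: (a, g)].

Lemma has_monomial1 : has_monomial gone.
Proof.
exists (Cfr 1); last exact: inU_scal.
by rewrite tofrac_eq0 mpolyC_eq0 oner_eq0.
Qed.

Lemma has_monomialM g h : has_monomial g -> has_monomial h -> has_monomial (gmul g h).
Proof.
move=> [a a0 Ua] [b b0 Ub]; exists (a * actK g b); last exact: inU_mul Ua Ub.
by rewrite -(actK_eq0 hb g) in b0; exact: mulf_neq0 a0 b0.
Qed.

Lemma Ufr_addC_neq0 i a : Ufr i + Cfr a != 0.
Proof.
rewrite -tofracD tofrac_eq0; apply/eqP => /(congr1 (mcoeff U_(i))).
rewrite mcoeffD mcoeffXU mcoeffC mnm1_eq0 eqxx mulr0 addr0 mcoeff0 => /eqP.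
by rewrite oner_eq0.
Qed.

Lemma Ufr_subr_addC_neq0 i j a : i != j -> Ufr j - Ufr i + Cfr a != 0.
Proof.
move=> ij; rewrite -tofracB -tofracD tofrac_eq0; apply/eqP => /(congr1 (mcoeff U_(j))).
rewrite mcoeffD mcoeffB !mcoeffXU mcoeffC mnm1_eq0 eqxx (negbTE ij) mulr0 addr0 subr0.
by rewrite mcoeff0 => /eqP; rewrite oner_eq0.
Qed.

Lemma has_monomial_tperm_succ (i j : 'I_n) : j = i.+1 :> nat ->
  has_monomial ([ffun=> 0], tperm i j).
Proof.
move=> ji; have ij : i != j by rewrite -val_eqE /= ji (ltn_eqF (ltnSn _)).
set d := Ufr j - Ufr i; set C := Cfr (c * l%:R).
have d0 : d != 0 by have := Ufr_subr_addC_neq0 0 ij; rewrite /Cfr mpolyC0 tofrac0 addr0.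
have [ud [Uud ud_d]] := inU_K_poly ('X_j - 'X_i); rewrite tofracB -/d in ud_d.
exists (d + C); first exact: Ufr_subr_addC_neq0.
have UT := inU_gen (gen_T l p zeta hb c cm ji).
apply: inU_eq (inU_add (inU_mul Uud UT) (inU_scal l p n zeta hb c cm (c * l%:R))) _.
move=> g; rewrite coef_cat (kmul_keql hb _ ud_d g) /Defs.kmul /= !actK1 !gmul1g.
rewrite /Defs.coef !big_cons !big_nil /= -/C mulrDr mulr1 mulrN !(mulrC d) divfK //.
by case: eqP; case: eqP; rewrite ?addr0 ?add0r ?addrK ?addNr.
Qed.

Lemma has_monomial_perm_mul s s' : has_monomial ([ffun=> 0], s) ->
  has_monomial ([ffun=> 0], s') -> has_monomial ([ffun=> 0], (s * s')%g).
Proof. by move=> Ms Ms'; rewrite -gmul_perm; exact: has_monomialM. Qed.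

Lemma has_monomial_tperm (i k : 'I_n) : has_monomial ([ffun=> 0], tperm i k).
Proof.
wlog ik : i k / (i < k)%N.
  move=> Hwlog; case: (ltngtP i k) => [|ki|/val_inj->]; first exact: Hwlog.
    by rewrite tpermC; exact: Hwlog.
  by rewrite tperm1; exact: has_monomial1.
have [d kE] : exists d, k = (i + d).+1 :> nat by exists (k - i.+1)%N; lia.
elim: d k kE {ik} => [|d IH] k kE.
  by apply: has_monomial_tperm_succ; rewrite kE addn0.
have m_lt : (i + d.+1 < n)%N by have := ltn_ord k; lia.
pose m := Ordinal m_lt.
have ik : i != k by rewrite -val_eqE /= kE; lia.
have im : i != m by rewrite -val_eqE /=; lia.
rewrite (tperm_conj ik im); have Mmk : has_monomial ([ffun=> 0], tperm m k).
  by apply: has_monomial_tperm_succ; rewrite kE /= addnS.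
rewrite -mulgA; apply: has_monomial_perm_mul => //; apply: has_monomial_perm_mul => //.
by apply: IH; rewrite /= addnS.
Qed.

Lemma has_monomial_perm s : has_monomial ([ffun=> 0], s).
Proof.
have [ts -> _] := prod_tpermP s; elim: ts => [|t ts IH].
  by rewrite big_nil; exact: has_monomial1.
by rewrite big_cons; apply: has_monomial_perm_mul => //; exact: has_monomial_tperm.
Qed.

Lemma has_monomial_permute (s : {perm 'I_n}) t : has_monomial (t, 1%g) ->
  has_monomial ([ffun i => t (s^-1 i)%g], 1%g).
Proof.
move=> Mt; rewrite -(mulVg s) -gmul_perm -gmul_perm_trans.
by do 2?apply: has_monomialM => //; exact: has_monomial_perm.
Qed.

Lemma has_monomial_ebasis_perm s i z : has_monomial (ebasis i z, s) ->
  forall j, has_monomial (ebasis j z, 1%g).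
Proof.
move=> Mi j; have := has_monomialM Mi (has_monomial_perm s^-1).
rewrite gmul_perm mulVg => /(has_monomial_permute (tperm i j)).
by rewrite ebasis_perm tpermL.
Qed.

Hypothesis n_gt0 : (0 < n)%N.

Lemma has_monomial_ebasis i : has_monomial (ebasis i l%:Z, 1%g).
Proof.
apply: (has_monomial_ebasis_perm (s := cyc n) (i := Ordinal n_gt0)).
exists (\prod_(m < l) (Ufr (Ordinal n_gt0) + Cfr (l%:R * hb - spar l zeta hb cm m))).
  by apply/prodf_neq0 => m _; exact: Ufr_addC_neq0.
exact/inU_gen/gen_X.
Qed.

Lemma has_monomial_ebasisN i : has_monomial (ebasis i (- l%:Z), 1%g).
Proof.
have last_lt : (n.-1 < n)%N by rewrite ltn_predL.
apply: (has_monomial_ebasis_perm (s := (cyc n)^-1) (i := Ordinal last_lt)).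
by exists 1; [exact: oner_neq0 | exact/inU_gen/gen_Y].
Qed.

Lemma has_monomial_lattice t : inT t -> has_monomial (t, 1%g).
Proof.
pose M t := has_monomial (t, 1%g).
have M0 : M 0 := has_monomial1.
have MD x y : M x -> M y -> M (x + y) by rewrite /M -gmul_trans; exact: has_monomialM.
have Mconst : M (tconst n (l %/ p)%:Z).
  exists (\prod_(i < n) \prod_(m < l %/ p)
            (Ufr i + Cfr ((l %/ p)%:R * hb - spar l zeta hb cm m))).
    by apply/prodf_neq0 => i _; apply/prodf_neq0 => m _; exact: Ufr_addC_neq0.
  exact/inU_gen/gen_P.
have MconstN : M (- tconst n (l %/ p)%:Z).
  have -> : - tconst n (l %/ p)%:Z = tconst n (- (l %/ p)%:Z).
    by apply/ffunP => i; rewrite !ffunE.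
  by exists 1; [exact: oner_neq0 | exact/inU_gen/gen_Q].
have Mbasis i z : M (ebasis i l%:Z *~ z).
  apply: addmonoid_mulrz => //; first exact: has_monomial_ebasis.
  have -> : - ebasis i l%:Z = ebasis i (- l%:Z).
    by apply/ffunP => j; rewrite !ffunE; case: eqP; rewrite ?oppr0.
  exact: has_monomial_ebasisN.
move=> [b [a tE]].
have -> : t = \sum_(i < n) ebasis i l%:Z *~ a i + tconst n (l %/ p)%:Z *~ b.
  apply/ffunP => j; rewrite tE !ffunE sum_ffunE (bigD1 j) //= big1 => [|i ij].
    by rewrite !ffunMzE !ffunE eqxx addr0 !mulrzz [a j * _]mulrC [b * _]mulrC.
  by rewrite ffunMzE ffunE ifN_eqC // mul0rz.
apply: (MD _ _ _ (addmonoid_mulrz M0 MD Mconst MconstN b)).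
by apply: big_ind => // i _; exact: Mbasis.
Qed.

Lemma has_monomial_inT g : inT g.1 -> has_monomial g.
Proof.
case: g => t s /= /has_monomial_lattice Mt.
by rewrite -[s]mulg1 -gmul_perm; apply: has_monomialM => //; exact: has_monomial_perm.
Qed.

Lemma inKT_rspan x : inKT x -> exists s : seq (Kstar * KK),
  (forall uk, uk \in s -> U uk.1) /\ keq x (ksum [seq kmul uk.1 (kembed uk.2) | uk <- s]).
Proof.
move: x; apply: inKT_ind.
- by exists [::].
- move=> x y [s [Us xs]] [s' [Us' ys']]; exists (s ++ s'); split.
    by move=> uk; rewrite mem_cat => /orP [/Us|/Us'].
  by move=> g; rewrite map_cat /Defs.ksum flatten_cat !coef_cat xs ys'.
- by move=> x y xy [s [Us xs]]; exists s; split => // g; rewrite -xy.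
- move=> k g _ /has_monomial_inT [a a0 Ua].
  have [k' k'E] := actK_surj hb g (k / a).
  exists [:: ([:: (a, g)], k')]; split; first by move=> uk; rewrite inE => /eqP ->.
  by move=> h; rewrite /= gmulg1 k'E mulrC divfK.
Qed.

Lemma inKT_lspan x : inKT x -> exists s : seq (KK * Kstar),
  (forall ku, ku \in s -> U ku.2) /\ keq x (ksum [seq kmul (kembed ku.1) ku.2 | ku <- s]).
Proof.
move: x; apply: inKT_ind.
- by exists [::].
- move=> x y [s [Us xs]] [s' [Us' ys']]; exists (s ++ s'); split.
    by move=> ku; rewrite mem_cat => /orP [/Us|/Us'].
  by move=> g; rewrite map_cat /Defs.ksum flatten_cat !coef_cat xs ys'.
- by move=> x y xy [s [Us xs]]; exists s; split => // g; rewrite -xy.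
- move=> k g _ /has_monomial_inT [a a0 Ua].
  exists [:: (k / a, [:: (a, g)])]; split; first by move=> ku; rewrite inE => /eqP ->.
  by move=> h; rewrite /= actK1 gmul1g divfK.
Qed.

End Cherednik.

Unset Implicit Arguments.
Set Strict Implicit.

Theorem proposition3p13 (F : numClosedFieldType) (l p n : nat)
    (zeta hb c : F) (cm : nat -> F) :
  (0 < l)%N -> (0 < p)%N -> (0 < n)%N -> (p %| l)%N ->
  l.-primitive_root zeta -> hb != 0 ->
  (forall m : nat, ~~ (p %| m)%N -> cm m = 0) ->
  let U := @inU F l p n zeta hb c cm in
  (* U is a subring of scr K = K * (T x| S_n) *)
  (forall u, U u -> @inKT F n l p u) /\
  (* U contains Gamma = F[U_1..U_n] *)
  (forall q : {mpoly F[n]}, exists u : Kstar F n, U u /\ keq u (kembed (tofrac q))) /\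
  (* U K = scr K *)
  (forall x : Kstar F n, @inKT F n l p x ->
     exists s : seq (Kstar F n * KK F n),
       (forall uk, uk \in s -> U uk.1) /\
       keq x (ksum [seq kmul hb uk.1 (kembed uk.2) | uk <- s])) /\
  (* K U = scr K *)
  (forall x : Kstar F n, @inKT F n l p x ->
     exists s : seq (KK F n * Kstar F n),
       (forall ku, ku \in s -> U ku.2) /\
       keq x (ksum [seq kmul hb (kembed ku.1) ku.2 | ku <- s])).
Proof.
move=> _ _ n_gt0 _ _ _ _ U.
split; first exact: inU_inKT.
split; first exact: inU_K_poly.
by split=> x; [exact: inKT_rspan | exact: inKT_lspan].
Qed.
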